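(* Let $\hat a=a_1+a_2\varepsilon$ and $\hat b=b_1+b_2\varepsilon$ be dual complex numbers ($a_1,a_2,b_1,b_2\in\mathbb C$), and let $\hat q=q_1+q_2 j+(q_3+q_4 j)\varepsilon$ ($q_1,\dots,q_4\in\mathbb C$) be a unit dual quaternion such that $\hat q^*\hat a\hat q=\hat b$. Then $\hat a=\hat b$ or $\hat a=\overline{\hat b}$, where $\overline{\hat b}=\overline{b_1}+\overline{b_2}\varepsilon$.
   Context: $\mathbb{Q}$ denotes the real quaternions with units $i,j,k$; complex numbers are identified with quaternions $a+bi$ (so $jz=\bar z j$). $\varepsilon$ satisfies $\varepsilon\ne0$, $\varepsilon^2=0$ and commutes with quaternions. A dual quaternion is $\tilde p_{st}+\tilde p_{\mathcal I}\varepsilon$ with quaternions $\tilde p_{st},\tilde p_{\mathcal I}$, conjugate $\hat p^*=\tilde p_{st}^*+\tilde p_{\mathcal I}^*\varepsilon$. A dual quaternion $\hat p$ is unit if $|\hat p|=1$, where $|\hat p|=|\tilde p_{st}|+\frac{\mathrm{sc}(\tilde p_{st}^*\tilde p_{\mathcal I})}{|\tilde p_{st}|}\varepsilon$ for $\tilde p_{st}\ne0$ (and $|\tilde p_{\mathcal I}|\varepsilon$ otherwise), $\mathrm{sc}(\tilde p)=\frac12(\tilde p+\tilde p^* )$; equivalently $\hat p^*\hat p=\hat p\hat p^*=1$. *)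

From HB Require Import structures.
From mathcomp Require Import all_boot all_order all_algebra.
From mathcomp Require Import complex.
Set Implicit Arguments. Unset Strict Implicit. Unset Printing Implicit Defensive.
Import Order.TTheory GRing.Theory Num.Theory.
Local Open Scope ring_scope.

Record quat (R : Type) := Quat { qr : R; qi : R; qj : R; qk : R }.

Section Quat.
Variable R : rcfType.

Definition qmul (p q : quat R) : quat R :=
  Quat (qr p * qr q - qi p * qi q - qj p * qj q - qk p * qk q)
       (qr p * qi q + qi p * qr q + qj p * qk q - qk p * qj q)
       (qr p * qj q - qi p * qk q + qj p * qr q + qk p * qi q)
       (qr p * qk q + qi p * qj q - qj p * qi q + qk p * qr q).
Definition qadd (p q : quat R) : quat R :=
  Quat (qr p + qr q) (qi p + qi q) (qj p + qj q) (qk p + qk q).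
Definition qconj (p : quat R) : quat R := Quat (qr p) (- qi p) (- qj p) (- qk p).
Definition qzero : quat R := Quat 0 0 0 0.
Definition qone : quat R := Quat 1 0 0 0.
Definition qnorm (p : quat R) : R :=
  Num.sqrt (qr p ^+ 2 + qi p ^+ 2 + qj p ^+ 2 + qk p ^+ 2).
Definition qsc (p : quat R) : R := qr p.
Definition qofC (z : R[i]) : quat R := Quat (@complex.Re R z) (@complex.Im R z) 0 0.

(* Dual quaternions p_st + p_I eps *)
Record dquat := DQuat { dst : quat R; dinf : quat R }.

Definition dqmul (p q : dquat) : dquat :=
  DQuat (qmul (dst p) (dst q)) (qadd (qmul (dst p) (dinf q)) (qmul (dinf p) (dst q))).
Definition dqconj (p : dquat) : dquat := DQuat (qconj (dst p)) (qconj (dinf p)).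

(* |p| as a dual number (real part, eps part) *)
Definition dqnorm (p : dquat) : R * R :=
  if (qr (dst p), qi (dst p), qj (dst p), qk (dst p)) != (0, 0, 0, 0) then (qnorm (dst p), qsc (qmul (qconj (dst p)) (dinf p)) / qnorm (dst p))
  else (0, qnorm (dinf p)).
Definition dq_unit (p : dquat) : Prop := dqnorm p = (1, 0).

Definition dcplx (a1 a2 : R[i]) : dquat := DQuat (qofC a1) (qofC a2).
End Quat.

From mathcomp Require Import all_boot all_order all_algebra.
From mathcomp Require Import complex ring.
Import Order.TTheory GRing.Theory Num.Theory.
Set Implicit Arguments. Unset Strict Implicit. Unset Printing Implicit Defensive.
Local Open Scope ring_scope.

(* Write q = p + r eps, so that |p| = 1 and sc(p^* r) = 0, and a1 = x1 + y1 i.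
   The standard part of q^* a q is x1 + y1 u with u = p^* i p, a pure unit
   quaternion, and its dual part is x2 + y2 u + 2 y1 vec(p^* i r).  If b is a
   dual complex number, then either y1 = y2 = 0, and a = b, or u has no j- and
   k-components, i.e. u = +-i.  In the latter case p^* i r = u (p^* r) has no
   i-component because p^* r is pure, so b = x1 +- y1 i + (x2 +- y2 i) eps. *)

Lemma mulf_eq0_pair (R : idomainType) (a b c : R) :
  a * b = 0 -> a * c = 0 -> a = 0 \/ (b = 0 /\ c = 0).
Proof.
move=> /eqP; rewrite mulf_eq0 => /orP[/eqP a0 _|/eqP b0]; first by left.
by move=> /eqP; rewrite mulf_eq0 => /orP[/eqP a0|/eqP c0]; [left | right].
Qed.

Section Quaternions.
Variable R : rcfType.
Implicit Types p x r : quat R.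

Definition qnorm2 p : R := qr p ^+ 2 + qi p ^+ 2 + qj p ^+ 2 + qk p ^+ 2.

Definition qconjby p x : quat R := qmul (qmul (qconj p) x) p.

Definition qI : quat R := Quat 0 1 0 0.

Lemma qnorm2_ge0 p : 0 <= qnorm2 p.
Proof. by rewrite !addr_ge0 // sqr_ge0. Qed.

Lemma dq_unitP (q : dquat R) :
  dq_unit q <-> qnorm2 (dst q) = 1 /\ qsc (qmul (qconj (dst q)) (dinf q)) = 0.
Proof.
case: q => p r; rewrite /dq_unit /dqnorm /qnorm -/(qnorm2 p) /=.
case: ifPn => [_|]; last first.
  rewrite negbK /qnorm2 => /eqP [-> -> -> ->]; split=> [[/esym/eqP]|[]].
    by rewrite oner_eq0.
  by rewrite expr0n /= !addr0 => /esym/eqP; rewrite oner_eq0.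
split=> [[hN]|[-> ->]]; last by rewrite sqrtr1 mul0r.
rewrite hN divr1; split=> //.
by rewrite -[LHS]sqr_sqrtr ?qnorm2_ge0 // hN expr1n.
Qed.

Lemma qr_conjby p x : qr (qconjby p x) = qnorm2 p * qr x.
Proof. by case: p x => [p0 p1 p2 p3] [x0 x1 x2 x3]; rewrite /= /qnorm2 /=; ring. Qed.

Lemma qconjby_qofC p (z : R[i]) :
  qconjby p (qofC z) =
  Quat (complex.Re z * qnorm2 p) (complex.Im z * qi (qconjby p qI))
       (complex.Im z * qj (qconjby p qI)) (complex.Im z * qk (qconjby p qI)).
Proof.
case: p z => [p0 p1 p2 p3] [x y].
by rewrite /qconjby /qnorm2 /qmul /qconj /qofC /=; congr Quat; ring.
Qed.

Lemma qnorm2_conjby p x : qnorm2 (qconjby p x) = qnorm2 p ^+ 2 * qnorm2 x.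
Proof.
case: p x => [p0 p1 p2 p3] [x0 x1 x2 x3].
by rewrite /qconjby /qnorm2 /qmul /qconj /=; ring.
Qed.

(* For a unit [p] we have [p p^* = 1], so [p^* x r = (p^* x p) (p^* r)]. *)
Lemma qmul_conjby p x r :
  qnorm2 p = 1 ->
  qmul (qmul (qconj p) x) r = qmul (qconjby p x) (qmul (qconj p) r).
Proof.
case: p x r => [p0 p1 p2 p3] [x0 x1 x2 x3] [r0 r1 r2 r3].
rewrite /qconjby /qnorm2 /qmul /qconj /= => hN.
by congr Quat; rewrite -[LHS]mul1r -hN; ring.
Qed.

(* The cross terms p^* a1 r + r^* a1 p contribute 2 Re a1 sc(p^* r) and
   2 Im a1 vec(p^* i r). *)
Lemma dinf_conjby_dcplx p r (a1 a2 : R[i]) :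
  dinf (dqmul (dqmul (dqconj (DQuat p r)) (dcplx a1 a2)) (DQuat p r)) =
  let v := qmul (qmul (qconj p) qI) r in
  Quat (complex.Re a2 * qnorm2 p + 2 * complex.Re a1 * qsc (qmul (qconj p) r))
       (complex.Im a2 * qi (qconjby p qI) + 2 * complex.Im a1 * qi v)
       (complex.Im a2 * qj (qconjby p qI) + 2 * complex.Im a1 * qj v)
       (complex.Im a2 * qk (qconjby p qI) + 2 * complex.Im a1 * qk v).
Proof.
case: p r a1 a2 => [p0 p1 p2 p3] [r0 r1 r2 r3] [x1 y1] [x2 y2].
by rewrite /= /qconjby /qnorm2 /qsc /qmul /qadd /qconj /qofC /=; congr Quat; ring.
Qed.

Lemma qi_mul_qconj_qI_eq0 p r :
  qnorm2 p = 1 -> qsc (qmul (qconj p) r) = 0 ->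
  qj (qconjby p qI) = 0 -> qk (qconjby p qI) = 0 ->
  qi (qmul (qmul (qconj p) qI) r) = 0.
Proof.
move=> hN hw hj hk; rewrite qmul_conjby //.
have hr : qr (qconjby p qI) = 0 by rewrite qr_conjby mulr0.
move: hr hj hk hw; rewrite /qsc.
move: (qconjby p qI) (qmul (qconj p) r) => [u0 u1 u2 u3] [w0 w1 w2 w3].
by rewrite /= => -> -> -> ->; ring.
Qed.

End Quaternions.

Arguments qI {R}.

Theorem lemma3p4 (R : rcfType) (a1 a2 b1 b2 : R[i]) (q : dquat R) :
  dq_unit q ->
  dqmul (dqmul (dqconj q) (dcplx a1 a2)) q = dcplx b1 b2 ->
  dcplx a1 a2 = dcplx b1 b2 \/ dcplx a1 a2 = dcplx (conjc b1) (conjc b2).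
Proof.
case: q => p r /dq_unitP [hN hw] e.
have hv := @qi_mul_qconj_qI_eq0 R p r hN hw.
have hu0 : qr (qconjby p qI) = 0 by rewrite qr_conjby mulr0.
have hu : qnorm2 (qconjby p qI) = 1.
  by rewrite qnorm2_conjby hN /qnorm2 /= expr0n expr1n !(add0r, addr0) mulr1.
have := congr1 (@dinf R) e; have := congr1 (@dst R) e.
rewrite dinf_conjby_dcplx [dst _]/= -/(qconjby p _) qconjby_qofC hN hw.
set u := qconjby p qI in hu0 hu hv *.
set v := qmul (qmul (qconj p) qI) r in hv *; clearbody u v.
move: hu; rewrite /qnorm2 hu0 expr0n add0r => hu.
case: a1 a2 b1 b2 e => [x1 y1] [x2 y2] [u1 v1] [u2 v2] _.
rewrite !mulr1 mulr0 addr0 => -[<- <- hy1j hy1k] [<- <- hy2j hy2k].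
have [[-> ->]|[hj hk]] : (y1 = 0 /\ y2 = 0) \/ (qj u = 0 /\ qk u = 0).
  have [y10|] := mulf_eq0_pair hy1j hy1k; last by right.
  rewrite y10 !(mulr0, mul0r, addr0) in hy2j hy2k.
  by have [y20|] := mulf_eq0_pair hy2j hy2k; [left | right].
by left; rewrite !(mul0r, mulr0, addr0).
rewrite hv // mulr0 addr0.
move: hu; rewrite hj hk expr0n /= !addr0 => /eqP; rewrite sqrf_eq1.
by case/orP=> /eqP ->; [left | right]; rewrite ?mulr1 ?mulrN1 ?opprK.
Qed.
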